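(* A class of Stone topological $\Omega$-algebras is a Stone variety if and only if it is a residually closed Stone pseudovariety.
   Context: $\Omega=\biguplus_n\Omega_n$ is a fixed topological signature; a Stone topological $\Omega$-algebra is a compact Hausdorff 0-dimensional space $A$ with continuous evaluation maps $\Omega_n\times A^n\to A$. A Stone pseudovariety is a nonempty class of Stone topological algebras closed under images by onto continuous homomorphisms that are Stone topological algebras, closed subalgebras, and finite direct products. A Stone variety is a nonempty class closed under such images, closed subalgebras, and arbitrary direct products. A class $\mathcal C$ is residually closed if every Stone topological algebra that is residually $\mathcal C$ (any two distinct elements separated by a continuous homomorphism into a member of $\mathcal C$) belongs to $\mathcal C$. *)

From HB Require Import structures.
From mathcomp Require Import all_boot all_order all_algebra.
From mathcomp Require Import all_classical all_reals all_analysis.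

Set Implicit Arguments.
Unset Strict Implicit.
Unset Printing Implicit Defensive.

Local Open Scope classical_set_scope.

(* A topological signature Omega = disjoint union of the Omega n, n : nat;
   each Omega n is a topological space (the operation symbols of arity n). *)
Definition signature := nat -> topologicalType.

(* A topological Omega-algebra structure on a topological space: an
   interpretation map for each arity.  Continuity of the evaluation maps
   Omega_n x A^n -> A is required in [is_stone] below. *)
Record TopAlg (Omega : signature) := {
  carrier :> topologicalType ;
  eval : forall n : nat, Omega n -> ('I_n -> carrier) -> carrier }.

Arguments eval {Omega} _ [n].

Definition eval_map (Omega : signature) (A : TopAlg Omega) (n : nat) :
  Omega n * {ptws 'I_n -> carrier A} -> carrier A :=
  fun p => eval A p.1 p.2.

Definition is_stone (Omega : signature) (A : TopAlg Omega) : Prop :=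
  [/\ compact [set: carrier A], hausdorff_space (carrier A),
      zero_dimensional (carrier A) &
      forall n : nat, continuous (@eval_map Omega A n)].

Definition is_hom (Omega : signature) (A B : TopAlg Omega) (f : A -> B) : Prop :=
  forall (n : nat) (w : Omega n) (a : 'I_n -> A), f (eval A w a) = eval B w (f \o a).

Definition is_chom (Omega : signature) (A B : TopAlg Omega) (f : A -> B) : Prop :=
  is_hom f /\ continuous f.

Definition subalg_closed (Omega : signature) (A : TopAlg Omega) (S : set A) : Prop :=
  forall (n : nat) (w : Omega n) (a : 'I_n -> A),
    (forall i, S (a i)) -> S (eval A w a).

(* The subalgebra on S, with the subspace topology (initial topology of the
   inclusion, as provided by MathComp-Analysis on [set_type S]). *)
Definition subalg (Omega : signature) (A : TopAlg Omega) (S : set A)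
  (hS : subalg_closed S) : TopAlg Omega.
Proof.
refine {| carrier := set_type S ; eval := fun n w a => exist _ (eval A w (fun i => sval (a i))) _ |}.
apply/mem_set; apply: hS => i; exact/set_mem/(svalP (a i)).
Defined.

Definition prod_alg (Omega : signature) (I : Type) (A : I -> TopAlg Omega) :
  TopAlg Omega :=
  {| carrier := prod_topology (fun i => carrier (A i)) ;
     eval := fun n w a => fun i => eval (A i) w (fun k => a k i) |}.

Definition alg_class (Omega : signature) := TopAlg Omega -> Prop.

Definition class_of_stone (Omega : signature) (C : alg_class Omega) : Prop :=
  forall A, C A -> is_stone A.

Definition nonempty_class (Omega : signature) (C : alg_class Omega) : Prop :=
  exists A, C A.

Definition closed_images (Omega : signature) (C : alg_class Omega) : Prop :=
  forall (A B : TopAlg Omega) (f : A -> B),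
    C A -> is_stone B -> is_chom f -> (forall y : B, exists x : A, f x = y) -> C B.

Definition closed_subalgebras (Omega : signature) (C : alg_class Omega) : Prop :=
  forall (A : TopAlg Omega) (S : set A) (hS : subalg_closed S),
    C A -> closed S -> C (subalg hS).

(* closed under finite direct products (finite index types, including the
   empty product) *)
Definition closed_finite_products (Omega : signature) (C : alg_class Omega) : Prop :=
  forall (I : finType) (A : I -> TopAlg Omega),
    (forall i, C (A i)) -> C (prod_alg A).

Definition closed_products (Omega : signature) (C : alg_class Omega) : Prop :=
  forall (I : Type) (A : I -> TopAlg Omega),
    (forall i, C (A i)) -> C (prod_alg A).

Definition stone_pseudovariety (Omega : signature) (C : alg_class Omega) : Prop :=
  [/\ nonempty_class C, closed_images C, closed_subalgebras C &
      closed_finite_products C].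

Definition stone_variety (Omega : signature) (C : alg_class Omega) : Prop :=
  [/\ nonempty_class C, closed_images C, closed_subalgebras C &
      closed_products C].

Definition residually (Omega : signature) (C : alg_class Omega) (A : TopAlg Omega) : Prop :=
  forall x y : A, x <> y ->
    exists (B : TopAlg Omega) (f : A -> B), [/\ C B, is_chom f & f x <> f y].

Definition residually_closed (Omega : signature) (C : alg_class Omega) : Prop :=
  forall A : TopAlg Omega, is_stone A -> residually C A -> C A.

From Pilot Require Import Defs.
From mathcomp Require Import all_boot all_order all_algebra.
From mathcomp Require Import all_classical all_reals all_analysis.

(* A variety is residually closed because a Stone algebra that is residually
   in C embeds, via the product of a separating family of continuous
   homomorphisms, into a product of members of C; by compactness the image is
   a closed subalgebra and the embedding is a homeomorphism onto it, so the
   algebra is a continuous homomorphic image of a member of C.  Conversely,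
   a product of members of C is a Stone algebra that is residually C through
   its projections, so a residually closed pseudovariety is closed under
   arbitrary products. *)

Set Implicit Arguments.
Unset Strict Implicit.
Unset Printing Implicit Defensive.

Local Open Scope classical_set_scope.

Section ProductTopology.
Context (I : Type) (T : I -> topologicalType).

Lemma proj_continuous_prod (i : I) : continuous (fun f : prod_topology T => f i).
Proof. exact: (@proj_continuous {classic I} T i). Qed.

Lemma continuous_into_prod (X : topologicalType) (g : X -> prod_topology T) :
  (forall i, continuous (fun x => g x i)) -> continuous g.
Proof.
move=> cg x; apply/cvg_sup => i.
move: x; apply/(@continuousP _ (initial_topology (fun f : prod_topology T => f i))).
by move=> _ [B oB <-]; move/continuousP: (cg i); apply.
Qed.

End ProductTopology.

Lemma continuous_pair (X Y Z : topologicalType) (f : X -> Y) (g : X -> Z) :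
  continuous f -> continuous g -> continuous (fun x => (f x, g x)).
Proof. by move=> cf cg x; apply: cvg_pair; [exact: cf | exact: cg]. Qed.

Lemma continuous_ptws_comp (U : Type) (X Y : topologicalType) (h : X -> Y) :
  continuous h -> continuous (fun g : {ptws U -> X} => (h \o g : {ptws U -> Y})).
Proof.
move=> ch; apply: continuous_into_prod => u g.
apply: (continuous_comp (@proj_continuous_prod U (fun=> X) u g)); exact: ch.
Qed.

Section ProductAlgebra.
Context (Omega : signature) (I : Type) (A : I -> TopAlg Omega).

Lemma proj_is_chom (i : I) : is_chom (fun f : prod_alg A => f i).
Proof. by split; last exact: proj_continuous_prod. Qed.

Lemma eval_map_prod_alg_continuous (n : nat) :
  (forall i, continuous (@eval_map Omega (A i) n)) ->
  continuous (@eval_map Omega (prod_alg A) n).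
Proof.
move=> cA; apply: continuous_into_prod => i.
have coord : continuous (fun g : {ptws 'I_n -> prod_alg A} =>
    (g^~ i : {ptws 'I_n -> A i})).
  exact/(continuous_ptws_comp (h := fun f : prod_alg A => f i))
       /proj_continuous_prod.
move=> p; apply: (@continuous_comp _ _ _
  (fun q : Omega n * {ptws 'I_n -> prod_alg A} =>
     (q.1, (q.2^~ i : {ptws 'I_n -> A i})))
  (@eval_map Omega (A i) n)); last exact: cA.
apply: continuous_pair => q; first exact: cvg_fst.
apply: (@continuous_comp _ _ _ (fun q : Omega n * {ptws 'I_n -> prod_alg A} => q.2)
  (fun g : {ptws 'I_n -> prod_alg A} => (g^~ i : {ptws 'I_n -> A i}))).
  exact: cvg_snd.
exact: coord.
Qed.

Lemma is_stone_prod_alg : (forall i, is_stone (A i)) -> is_stone (prod_alg A).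
Proof.
move=> sA; split.
- have := @tychonoff {classic I} (fun i => carrier (A i)) (fun=> setT).
  have -> : [set f : forall i : {classic I}, A i | forall i, setT (f i)] = setT.
    by rewrite predeqE.
  by apply=> i; case: (sA i).
- by apply: (@hausdorff_product {classic I}) => i; case: (sA i).
- by apply: (@zero_dimension_prod {classic I}) => i; case: (sA i).
- by move=> n; apply: eval_map_prod_alg_continuous => i; case: (sA i).
Qed.

Lemma prod_alg_residually (C : alg_class Omega) :
  (forall i, C (A i)) -> residually C (prod_alg A).
Proof.
move=> CA x y xy.
have [i xy_i] : exists i, x i <> y i.
  by apply/boolp.existsNP => eq_xy; apply/xy/functional_extensionality_dep.
by exists (A i), (fun f : prod_alg A => f i); split => //; exact: proj_is_chom.
Qed.

End ProductAlgebra.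

Section CompactEmbedding.
Context (Omega : signature) (A B : TopAlg Omega) (f : A -> B).
Hypotheses (f_chom : is_chom f) (f_inj : injective f)
  (A_compact : compact [set: A]) (B_hausdorff : hausdorff_space B).

Lemma range_subalg_closed : Defs.subalg_closed (range f).
Proof.
move=> n w b rb; have /choice[a fa] : forall i, exists x, f x = b i.
  by move=> i; case: (rb i) => x _ <-; exists x.
exists (Defs.eval A w a) => //; rewrite f_chom.1; congr (Defs.eval B w _).
exact/boolp.funext.
Qed.

Lemma closed_image_of_closed (K : set A) : closed K -> closed (f @` K).
Proof.
move=> clK; apply: compact_closed => //; apply: continuous_compact.
  exact/continuous_subspaceT/f_chom.2.
exact: subclosed_compact clK A_compact _.
Qed.

Local Notation range_alg := (subalg range_subalg_closed).

Definition range_inverse (s : range_alg) : A :=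
  sval (cid2 (set_mem (svalP s))).

Lemma range_inverseK (s : range_alg) : f (range_inverse s) = sval s.
Proof. by rewrite /range_inverse; case: cid2. Qed.

Lemma range_inverse_chom : is_chom range_inverse.
Proof.
split.
  move=> n w s; apply: f_inj; rewrite range_inverseK f_chom.1 /=.
  by congr (Defs.eval B w _); apply: boolp.funext => i /=; rewrite range_inverseK.
apply/continuous_closedP => K clK.
have -> : range_inverse @^-1` K = sval @^-1` (f @` K).
  rewrite predeqE => s; split => [Ks | [a Ka fa]].
    by exists (range_inverse s); last exact: range_inverseK.
  rewrite /preimage /=; suff -> : range_inverse s = a by [].
  by apply: f_inj; rewrite range_inverseK.
move: (closed_image_of_closed clK); apply: (proj1 (continuous_closedP _)).
exact: (@initial_continuous (set_type (range f)) B set_val).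
Qed.

Lemma range_inverse_surjective (a : A) : exists s : range_alg, range_inverse s = a.
Proof.
have ra : f a \in range f by apply: mem_set; exists a.
by exists (exist _ (f a) ra); apply: f_inj; rewrite range_inverseK.
Qed.

End CompactEmbedding.

Section ResiduallyClosed.
Context (Omega : signature) (C : alg_class Omega).

Lemma residually_embeds_in_prod (A : TopAlg Omega) : residually C A ->
  exists (I : Type) (B : I -> TopAlg Omega) (F : A -> prod_alg B),
    [/\ forall i, C (B i), is_chom F & injective F].
Proof.
move=> rA; pose I := {p : A * A | p.1 <> p.2}.
have sep (p : I) : {B : TopAlg Omega & {g : A -> B |
    [/\ C B, is_chom g & g (sval p).1 <> g (sval p).2]}}.
  by case: p => -[x y] /= xy; have /cid[B /cid[g gP]] := rA x y xy; exists B, g.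
pose B p := projT1 (sep p); pose g p : A -> B p := sval (projT2 (sep p)).
have gP p : [/\ C (B p), is_chom (g p) & g p (sval p).1 <> g p (sval p).2].
  exact: svalP (projT2 (sep p)).
exists I, B, (fun a p => g p a); split.
- by move=> p; case: (gP p).
- split; last by apply: continuous_into_prod => p; case: (gP p) => _ [].
  move=> n w a; apply: functional_extensionality_dep => p /=.
  by case: (gP p) => _ [g_hom _] _; exact: g_hom.
- move=> x y gxy; apply: contrapT => xy.
  case: (gP (exist _ (x, y) xy)) => _ _; apply.
  exact: (congr1 (fun h => h (exist _ (x, y) xy)) gxy).
Qed.

Lemma variety_residually_closed : class_of_stone C -> closed_images C ->
  closed_subalgebras C -> closed_products C -> residually_closed C.
Proof.
move=> sC ci cs cp A sA /residually_embeds_in_prod[I [B [F [CB F_chom F_inj]]]].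
have [A_compact _ _ _] := sA.
have [_ P_hausdorff _ _] := @is_stone_prod_alg _ _ B (fun i => sC _ (CB i)).
apply: (ci _ _ (@range_inverse _ _ _ _ F_chom) _ sA).
- apply: cs; first exact: cp.
  exact: (closed_image_of_closed F_chom A_compact P_hausdorff (@closedT A)).
- exact: range_inverse_chom.
- exact: range_inverse_surjective.
Qed.

End ResiduallyClosed.

Theorem proposition5p14 (Omega : signature) (C : alg_class Omega) :
  class_of_stone C ->
  (stone_variety C <-> stone_pseudovariety C /\ residually_closed C).
Proof.
move=> sC; split.
  case=> ne ci cs cp; split; first by split=> // I A CA; exact: cp.
  exact: variety_residually_closed.
case=> -[ne ci cs _] rc; split=> // I A CA.
apply: rc; first by apply: is_stone_prod_alg => i; exact: sC.
exact: prod_alg_residually.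
Qed.
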